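(* Let $g\geq 0$ and $n\geq 1$ be integers, and let $\mathcal{A}_1,\dots,\mathcal{A}_{N-1},\mathcal{A}_N=\mathcal{A}$ be weight data in $\mathcal{D}_{g,n}$, each lying in a chamber, with chambers $Ch_{\mathcal{A}_p}\ni\mathcal{A}_p$, such that the chambers up to symmetry form an ordered sequence $$[Ch_{\mathcal{A}_1}]\leq [Ch_{\mathcal{A}_2}]\leq \dots\leq [Ch_{\mathcal{A}_{N-1}}]\leq [Ch_{\mathcal{A}}].$$ Then this sequence induces a filtration by embeddings $$M^{trop}_{g,\mathcal{A}_1}\hookrightarrow M^{trop}_{g,\mathcal{A}_2}\hookrightarrow \dots\hookrightarrow M^{trop}_{g,\mathcal{A}_{N-1}}\hookrightarrow M^{trop}_{g,\mathcal{A}}.$$ The same holds with $M^{trop}_{g,\mathcal{A}_p}$ replaced throughout by the moduli space $\overline{M}^{trop}_{g,\mathcal{A}_p}$ of extended $(g,\mathcal{A}_p)$-stable tropical curves, or by the moduli space $\Delta_{g,\mathcal{A}_p}$ of $(g,\mathcal{A}_p)$-stable tropical curves of volume $1$.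
   Context: Weight data: for integers $g\ge0,n\ge1$, a weight datum is $\mathcal{A}=(a_1,\dots,a_n)$ with $a_i\in\mathbb{Q}\cap(0,1]$ and $2g-2+\sum_i a_i>0$; $\mathcal{D}_{g,n}\subset\mathbb{R}^n$ is the set of weight data. Write $\mathcal{A}\le\mathcal{B}$ if $a_i\le b_i$ for all $i$. Walls and chambers: for $S\subseteq\{1,\dots,n\}$ with $2\le|S|\le n$ if $g\ge1$ (resp. $2\le |S|\le n-2$ if $g=0$), the wall $w_S$ is the locus $\sum_{i\in S}a_i=1$ in $\mathcal{D}_{g,n}$; $W_f$ is the set of walls. The chambers (fine chamber decomposition) are the connected components of $\mathcal{D}_{g,n}\setminus\bigcup_{w\in W_f}w$; a chamber is determined by specifying, for each such $S$, whether $\sum_{i\in S}a_i<1$ or $>1$. $\mathbf{K}$ denotes the set of chambers. Partial order on $\mathbf{K}$: $Ch_1\le Ch_2$ iff for every such $S$, whenever $\sum_{i\in S}a_i>1$ for $\mathcal{A}\in Ch_1$ then $\sum_{i\in S}b_i>1$ for $\mathcal{B}\in Ch_2$ (i.e. all defining inequalities that differ have $<1$ on $Ch_1$ and $>1$ on $Ch_2$). The symmetric group $S_n$ acts on $\mathcal{D}_{g,n}$ by permuting coordinates, hence on $\mathbf{K}$; the orbit of $Ch$ is the chamber up to symmetry $[Ch]$, and $[Ch_1]\le[Ch_2]$ iff there are $Ch_1'\in[Ch_1]$, $Ch_2'\in[Ch_2]$ with $Ch_1'\le Ch_2'$. Stable graphs: a $(g,\mathcal{A})$-stable graph is a finite connected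 graph $G$ (loops and multiple edges allowed) with a vertex weight $w:V(G)\to\mathbb{Z}_{\ge0}$ and $n$ legs labelled $1,\dots,n$ attached to vertices via $m:\{1,\dots,n\}\to V(G)$, such that $b_1(G)+\sum_v w(v)=g$ and for each vertex $v$, $2w(v)-2+|v|_E+|v|_{\mathcal{A}}>0$, where $|v|_E$ is the number of edge half-edges at $v$ (loops counted twice) and $|v|_{\mathcal{A}}=\sum_{m(i)=v}a_i$. Tropical moduli spaces: a $(g,\mathcal{A})$-stable tropical curve is such a graph with edge lengths $\ell:E(G)\to\mathbb{R}_{>0}$; $M^{trop}_{g,\mathcal{A}}$ is the set of isomorphism classes, topologized as the colimit of the cones $\mathbb{R}_{\ge0}^{E(G)}$ over all $(g,\mathcal{A})$-stable graphs glued along weighted edge contractions (an edge of length $0$ is contracted) and isomorphisms. $\overline{M}^{trop}_{g,\mathcal{A}}$ is defined analogously allowing lengths in $\mathbb{R}_{>0}\cup\{\infty\}$, and $\Delta_{g,\mathcal{A}}\subset M^{trop}_{g,\mathcal{A}}$ is the subspace of curves with total edge length $1$. *)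

From HB Require Import structures.
From mathcomp Require Import all_boot all_order all_algebra all_fingroup.
From mathcomp Require Import all_classical all_reals.
From mathcomp Require Import topology normedtype ereal.
Set Implicit Arguments. Unset Strict Implicit. Unset Printing Implicit Defensive.
Import Order.TTheory GRing.Theory Num.Theory.
Import numFieldNormedType.Exports.
Local Open Scope classical_set_scope.
Local Open Scope ring_scope.

Definition wsum (n : nat) (A : 'I_n -> rat) (S : {set 'I_n}) : rat :=
  \sum_(i in S) A i.

Definition weight_datum (g n : nat) (A : 'I_n -> rat) : Prop :=
  (forall i, 0 < A i /\ A i <= 1) /\
  0 < (2 * g)%:R - 2 + \sum_(i < n) A i.

Definition wall_index (g n : nat) (S : {set 'I_n}) : bool :=
  if (1 <= g)%N then ((2 <= #|S|) && (#|S| <= n))%N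
  else ((2 <= #|S|) && (#|S| <= n - 2))%N.

Definition in_chamber (g n : nat) (A : 'I_n -> rat) : Prop :=
  forall S, wall_index g S -> wsum A S != 1.

(* Ch_A <= Ch_B (chambers represented by points of them) *)
Definition chamber_le (g n : nat) (A B : 'I_n -> rat) : Prop :=
  forall S, wall_index g S -> 1 < wsum A S -> 1 < wsum B S.

Definition permute_wt (n : nat) (s : 'S_n) (A : 'I_n -> rat) : 'I_n -> rat :=
  fun i => A (s i).

Definition sym_chamber_le (g n : nat) (A B : 'I_n -> rat) : Prop :=
  exists s1 s2 : 'S_n, chamber_le g (permute_wt s1 A) (permute_wt s2 B).

(* Edge e has (unordered) endpoints (ends e).1, (ends e).2; loops allowed,
   multiple edges allowed. *)
Record lgraph (n : nat) := LGraph {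
  nv : nat;
  ne : nat;
  ends : 'I_ne -> 'I_nv * 'I_nv;
  wt : 'I_nv -> nat;
  leg : 'I_n -> 'I_nv }.
Arguments nv {n} l.
Arguments ne {n} l.
Arguments ends {n} l _.
Arguments wt {n} l _.
Arguments leg {n} l _.

Definition adj n (G : lgraph n) : rel 'I_(nv G) :=
  fun u v => [exists e, (ends G e == (u, v)) || (ends G e == (v, u))].

Definition connected_graph n (G : lgraph n) : Prop :=
  (0 < nv G)%N /\ forall u v, connect (@adj n G) u v.

(* |v|_E : half-edges at v, loops counted twice *)
Definition valE n (G : lgraph n) (v : 'I_(nv G)) : nat :=
  (#|[set e | (ends G e).1 == v]| + #|[set e | (ends G e).2 == v]|)%N.

Definition valA n (A : 'I_n -> rat) (G : lgraph n) (v : 'I_(nv G)) : rat :=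
  \sum_(i | leg G i == v) A i.

(* (g,A)-stable graph.  For a connected graph b_1(G) = |E| - |V| + 1,
   so b_1(G) + sum_v w(v) = g is written |E| + 1 + sum_v w(v) = g + |V|. *)
Definition stable_graph (g n : nat) (A : 'I_n -> rat) (G : lgraph n) : Prop :=
  connected_graph G /\
  (ne G + 1 + \sum_(v < nv G) wt G v = g + nv G)%N /\
  (forall v, 0 < (2 * wt G v + valE v)%:R - 2 + valA A v).

Definition relabel n (s : 'S_n) (G : lgraph n) : lgraph n :=
  @LGraph n (nv G) (ne G) (ends G) (wt G) (fun i => leg G (s i)).

(* a graph with edge lengths in L (length z = "zero", to be contracted) *)

Record trep (L : Type) (n : nat) := TRep {
  tgr : lgraph n;
  tlen : 'I_(ne tgr) -> L }.
Arguments tgr {L n} t.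
Arguments tlen {L n} t _.
Arguments TRep {L n} tgr tlen.

Definition trelabel (L : Type) n (s : 'S_n) (x : trep L n) : trep L n :=
  @TRep L n (relabel s (tgr x)) (tlen x).

Section Contraction.
Variables (L : eqType) (z : L) (n : nat).

Definition zadj (x : trep L n) : rel 'I_(nv (tgr x)) :=
  fun u v => [exists e, (tlen x e == z) &&
     ((ends (tgr x) e == (u, v)) || (ends (tgr x) e == (v, u)))].

(* u and v lie in the same connected component of the zero-length subgraph,
   i.e. get identified by the contraction of the zero-length edges *)
Definition zcls (x : trep L n) (u v : 'I_(nv (tgr x))) : bool :=
  connect (@zadj x) u v.

(* weight of the contracted vertex [u]:
   sum of weights in the component + b_1 of the component *)
Definition cwt (x : trep L n) (u : 'I_(nv (tgr x))) : int :=
  ((\sum_(v | zcls u v) wt (tgr x) v)%N%:Z +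
   #|[set e | (tlen x e == z) && zcls u (ends (tgr x) e).1]|%:Z + 1
   - #|[set v | zcls u v]|%:Z)%R.

(* x ~ y : the tropical curves obtained from x and y by contracting all
   edges of length z are isomorphic.  phi induces the bijection on the
   vertices of the contracted graphs (components), psi the bijection on
   the remaining (non-contracted) edges. *)
Definition trop_equiv (x y : trep L n) : Prop :=
  exists (phi : 'I_(nv (tgr x)) -> 'I_(nv (tgr y)))
         (psi : 'I_(ne (tgr x)) -> 'I_(ne (tgr y))),
    (forall u v, zcls u v = zcls (phi u) (phi v)) /\
    (forall v', exists u, zcls (phi u) v') /\
    (forall e, tlen x e != z -> tlen y (psi e) = tlen x e) /\
    (forall e1 e2, tlen x e1 != z -> tlen x e2 != z -> psi e1 = psi e2 -> e1 = e2) /\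
    (forall e', tlen y e' != z -> exists2 e, tlen x e != z & psi e = e') /\
    (forall e, tlen x e != z ->
       (zcls (phi (ends (tgr x) e).1) (ends (tgr y) (psi e)).1 &&
        zcls (phi (ends (tgr x) e).2) (ends (tgr y) (psi e)).2) ||
       (zcls (phi (ends (tgr x) e).1) (ends (tgr y) (psi e)).2 &&
        zcls (phi (ends (tgr x) e).2) (ends (tgr y) (psi e)).1)) /\
    (forall i, zcls (phi (leg (tgr x) i)) (leg (tgr y) i)) /\
    (forall u, cwt u = cwt (phi u)).

End Contraction.

(* Moduli spaces as quotient spaces: a space is given by its set of    *)
(* representatives, the identification relation, and its open sets    *)
(* (represented by saturated sets of representatives).                 *)

Record qspace (X : Type) := QSpace {
  qpts : set X;
  qeq : X -> X -> Prop;
  qopen : set X -> Prop }.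

Section Moduli.
Variables (T : topologicalType) (z : T) (dom : set T).

(* open subsets of the cone dom^k (product topology, finite product) *)
Definition cone_open (k : nat) (C : set ('I_k -> T)) : Prop :=
  forall l, (forall e, dom (l e)) -> C l ->
    exists N : 'I_k -> set T, (forall e, nbhs (l e) (N e)) /\
      forall l', (forall e, dom (l' e)) -> (forall e, N e (l' e)) -> C l'.

Definition mpts (g n : nat) (A : 'I_n -> rat) : set (trep T n) :=
  [set x | stable_graph g A (tgr x) /\ forall e, dom (tlen x e)].

Definition saturated (n : nat) (P : set (trep T n)) (U : set (trep T n)) :=
  forall x y, P x -> P y -> trop_equiv z x y -> U x -> U y.

(* colimit topology: U open iff its pullback to every cone is open *)
Definition mopen (g n : nat) (A : 'I_n -> rat) (U : set (trep T n)) : Prop :=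
  U `<=` mpts g A /\ saturated (mpts g A) U /\
  forall G : lgraph n, stable_graph g A G ->
    cone_open (fun l : 'I_(ne G) -> T => U (TRep G l)).

Definition moduli (g n : nat) (A : 'I_n -> rat) : qspace (trep T n) :=
  QSpace (mpts g A) (@trop_equiv T z n) (mopen g A).

End Moduli.

Definition Mtrop (R : realType) (g n : nat) (A : 'I_n -> rat) :=
  @moduli R (0 : R) [set x : R | 0 <= x] g n A.

Definition Mtrop_bar (R : realType) (g n : nat) (A : 'I_n -> rat) :=
  @moduli (\bar R) (0%E : \bar R) [set x : \bar R | (0 <= x)%E] g n A.

Definition total_length (R : realType) n (x : trep R n) : R :=
  \sum_(e < ne (tgr x)) tlen x e.

Definition Delta_trop (R : realType) (g n : nat) (A : 'I_n -> rat) :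
    qspace (trep R n) :=
  QSpace [set x | qpts (Mtrop R g A) x /\ total_length x = 1]
         (@trop_equiv R 0 n)
         (fun U => exists V, qopen (Mtrop R g A) V /\
              U = V `&` [set x | total_length x = 1]).

(* f (acting on representatives) induces a topological embedding of the
   quotient spaces: well defined, injective, continuous, and a
   homeomorphism onto its image (initial topology). *)
Definition qembedding (X Y : Type) (SX : qspace X) (SY : qspace Y)
    (f : X -> Y) : Prop :=
  (forall x, qpts SX x -> qpts SY (f x)) /\
  (forall x y, qpts SX x -> qpts SX y -> qeq SX x y -> qeq SY (f x) (f y)) /\
  (forall x y, qpts SX x -> qpts SX y -> qeq SY (f x) (f y) -> qeq SX x y) /\
  (forall V, qopen SY V -> qopen SX [set x | qpts SX x /\ V (f x)]) /\
  (forall U, qopen SX U -> exists V, qopen SY V /\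
      forall x, qpts SX x -> (U x <-> V (f x))).

(* Fix permutations s1, s2 with Ch(s1 A) <= Ch(s2 B), and relabel the legs by
   s = s2^-1 * s1.  A vertex of a graph is stable according to the value of
   k = 2 w(v) + |v|_E: for k >= 3 always, for k = 2 iff it carries a leg, for k = 1 iff
   the weight of its legs exceeds 1, and k = 0 only for a one-vertex graph of genus 0.  The
   chamber order preserves "weight > 1" on walls, and off the walls it is forced, so every
   (g,A)-stable graph is (g,B)-stable after relabelling.  Relabelling commutes with the
   identification of curves that agree after contracting zero-length edges, hence is
   injective on classes.  For the topology, an open set U of curves for A is the trace of
   the set of B-curves all of whose A-representatives lie in U.  This set is open because
   an isomorphism between contracted curves can be transported to any further degeneration
   of the edge lengths, and near a point only finitely many zero patterns occur.  The
   volume-one spaces are subspaces, to which the embeddings restrict. *)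

From HB Require Import structures.
From mathcomp Require Import all_boot all_order all_algebra all_fingroup.
From mathcomp Require Import all_classical all_reals.
From mathcomp Require Import topology normedtype ereal.
From mathcomp Require Import zify ring lra.
Import Order.TTheory GRing.Theory Num.Theory.
Local Open Scope ring_scope.
Set Implicit Arguments. Unset Strict Implicit. Unset Printing Implicit Defensive.

Lemma connect_homo (T T' : finType) (e : rel T) (e' : rel T') (f : T -> T') :
  {homo f : u v / e u v >-> connect e' u v} ->
  {homo f : u v / connect e u v >-> connect e' u v}.
Proof.
move=> fe u _ /connectP[p e_p ->]; elim: p u e_p => //= v p IHp u /andP[euv /IHp].
exact/connect_trans/fe.
Qed.

Lemma card_classical_set (T : finType) (P : pred T) :
  #|[set x | P x]%classic| = #|[set x | P x]%SET|.
Proof. by apply: eq_card => x; rewrite inE /in_set unfold_in /= asboolb. Qed.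

Lemma Posz_sum (I : finType) (P : pred I) (F : I -> nat) :
  Posz (\sum_(i | P i) F i)%N = \sum_(i | P i) Posz (F i).
Proof. by rewrite -natz natr_sum; apply: eq_bigr => i _; rewrite natz. Qed.

Lemma sum_card_fibers (I J : finType) (P : pred I) (p : I -> J) (C : pred J) :
  (\sum_(j | C j) #|[set i | P i && (p i == j)]|)%N = #|[set i | P i && C (p i)]|.
Proof.
rewrite -[RHS]sum1_card (partition_big p C) => [|i]; last by rewrite inE => /andP[].
apply: eq_bigr => j Cj; rewrite -sum1_card; apply: eq_bigl => i; rewrite !inE.
by case: (p i =P j) => [->|]; rewrite ?Cj ?andbT ?andbF.
Qed.

Section ZeroClasses.
Variables (L : eqType) (z : L) (n : nat).
Implicit Types x y : trep L n.
Local Notation vert x := 'I_(nv (tgr x)).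

Lemma zadj_sym x : symmetric (@zadj L z n x).
Proof. by move=> u v; apply/existsP/existsP => -[e He]; exists e; rewrite orbC. Qed.

Lemma zadj_connect_sym x : connect_sym (@zadj L z n x).
Proof. exact/sym_connect_sym/zadj_sym. Qed.

Lemma zcls_refl x (u : vert x) : zcls z u u.
Proof. exact: connect0. Qed.

Lemma zcls_sym x (u v : vert x) : zcls z u v = zcls z v u.
Proof. exact: zadj_connect_sym. Qed.

Lemma zcls_trans x (u v w : vert x) : zcls z u v -> zcls z v w -> zcls z u w.
Proof. exact: connect_trans. Qed.

Lemma zcls_congr x (u u' v v' : vert x) :
  zcls z u u' -> zcls z v v' -> zcls z u v = zcls z u' v'.
Proof.
move=> uu' vv'; apply/idP/idP => uv.
  by apply: zcls_trans vv'; apply: zcls_trans uv; rewrite zcls_sym.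
by apply: zcls_trans uu' _; apply: zcls_trans uv _; rewrite zcls_sym.
Qed.

Lemma zcls_zero_edge x e : tlen x e = z -> zcls z (ends (tgr x) e).1 (ends (tgr x) e).2.
Proof.
by move=> /eqP e0; apply/connect1/existsP; exists e; rewrite e0 -surjective_pairing eqxx.
Qed.

Lemma cwt_zcls x (u v : vert x) : zcls z u v -> cwt z u = cwt z v.
Proof.
move=> uv; have E w : zcls z u w = zcls z v w by apply: zcls_congr => //; apply: zcls_refl.
rewrite /cwt (eq_bigl _ _ E); congr (_ + _ + _ - _); congr Posz; apply: eq_card => t;
  by rewrite /in_set !unfold_in /= E.
Qed.

Definition zpair x (p q : vert x * vert x) : bool :=
  (zcls z p.1 q.1 && zcls z p.2 q.2) || (zcls z p.1 q.2 && zcls z p.2 q.1).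

Lemma zpair_sym x (p q : vert x * vert x) : zpair p q = zpair q p.
Proof.
rewrite /zpair (zcls_sym q.1 p.1) (zcls_sym q.2 p.2) (zcls_sym q.1 p.2) (zcls_sym q.2 p.1).
by rewrite [zcls z p.2 q.1 && _]andbC.
Qed.

Lemma zpair_trans x (p q r : vert x * vert x) : zpair p q -> zpair q r -> zpair p r.
Proof.
move=> /orP[]/andP[p1 p2] /orP[]/andP[q1 q2]; rewrite /zpair.
- by rewrite (zcls_trans p1 q1) (zcls_trans p2 q2).
- by rewrite (zcls_trans p1 q1) (zcls_trans p2 q2) orbT.
- by rewrite (zcls_trans p1 q2) (zcls_trans p2 q1) orbT.
- by rewrite (zcls_trans p1 q2) (zcls_trans p2 q1).
Qed.

Lemma zpair_zcls x (p q : vert x * vert x) :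
  zpair p q -> zcls z q.1 q.2 -> zcls z p.1 p.2.
Proof.
move=> /orP[]/andP[p1 p2] q12; rewrite zcls_sym in p2.
  exact: zcls_trans p1 (zcls_trans q12 p2).
rewrite zcls_sym in q12; exact: zcls_trans p1 (zcls_trans q12 p2).
Qed.

Lemma zpair_zcls_fst x (p q : vert x * vert x) :
  zpair p q -> zcls z p.1 p.2 -> zcls z p.1 q.1.
Proof. by move=> /orP[]/andP[p1 p2] p12 //; apply: zcls_trans p12 p2. Qed.

Lemma zpair_map x y (f : vert x -> vert y) (p q : vert x * vert x) :
  {homo f : u v / zcls z u v} -> zpair p q -> zpair (f p.1, f p.2) (f q.1, f q.2).
Proof. by move=> fh /orP[]/andP[/fh p1 /fh p2]; rewrite /zpair /= p1 p2 ?orbT. Qed.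

Record trop_iso x y (phi : vert x -> vert y) (psi : 'I_(ne (tgr x)) -> 'I_(ne (tgr y))) :
    Prop := TropIso {
  iso_zcls : forall u v, zcls z u v = zcls z (phi u) (phi v);
  iso_vsurj : forall v', exists u, zcls z (phi u) v';
  iso_len : forall e, tlen x e != z -> tlen y (psi e) = tlen x e;
  iso_einj : forall e1 e2, tlen x e1 != z -> tlen x e2 != z -> psi e1 = psi e2 -> e1 = e2;
  iso_esurj : forall e', tlen y e' != z -> exists2 e, tlen x e != z & psi e = e';
  iso_ends : forall e, tlen x e != z ->
    zpair (phi (ends (tgr x) e).1, phi (ends (tgr x) e).2) (ends (tgr y) (psi e));
  iso_legs : forall i, zcls z (phi (leg (tgr x) i)) (leg (tgr y) i);
  iso_cwt : forall u, cwt z u = cwt z (phi u) }.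

Lemma trop_equivP x y : trop_equiv z x y <-> exists phi psi, @trop_iso x y phi psi.
Proof.
by split=> [[phi [psi [? [? [? [? [? [? [? ?]]]]]]]]] | [phi [psi []]]]; exists phi, psi.
Qed.

Lemma iso_zcls_homo x y phi psi : @trop_iso x y phi psi -> {homo phi : u v / zcls z u v}.
Proof. by move=> iso u v; rewrite (iso_zcls iso). Qed.

Lemma iso_edge_inverse x y phi psi : @trop_iso x y phi psi -> (0 < ne (tgr x))%N ->
  exists pre, forall h, tlen y h != z -> tlen x (pre h) != z /\ psi (pre h) = h.
Proof.
move=> iso x_ne.
have /choice[pre preK] : forall h, exists e,
    tlen y h != z -> tlen x e != z /\ psi e = h.
  move=> h; case: (boolP (tlen y h != z)) => [/(iso_esurj iso)|_].
    by case=> e e_nz <-; exists e.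
  by exists (Ordinal x_ne).
by exists pre.
Qed.

Lemma trop_equiv_refl x : trop_equiv z x x.
Proof.
apply/trop_equivP; exists id, id; split=> //.
- by move=> v; exists v; apply: zcls_refl.
- by move=> e' e'_nz; exists e'.
- by move=> e _; rewrite /zpair !zcls_refl.
- by move=> i; apply: zcls_refl.
Qed.

Lemma trop_equiv_relabel (s : 'S_n) x y :
  trop_equiv z (trelabel s x) (trelabel s y) <-> trop_equiv z x y.
Proof.
rewrite !trop_equivP; split=> -[phi [psi [? ? ? ? ? ? legs ?]]]; exists phi, psi; split=> //.
  by move=> i; have := legs (s^-1 i)%g; rewrite /= permKV.
by move=> i; apply: legs.
Qed.

Lemma trop_equiv_trans x y w : trop_equiv z x y -> trop_equiv z y w -> trop_equiv z x w.
Proof.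
move=> /trop_equivP[phi1 [psi1 iso1]] /trop_equivP[phi2 [psi2 iso2]].
have nz1 e : tlen x e != z -> tlen y (psi1 e) != z by move=> e_nz; rewrite (iso_len iso1).
apply/trop_equivP; exists (phi2 \o phi1), (psi2 \o psi1); split=> /=.
- by move=> u v; rewrite (iso_zcls iso1) (iso_zcls iso2).
- move=> v'; have [v v_v'] := iso_vsurj iso2 v'; have [u u_v] := iso_vsurj iso1 v.
  by exists u; apply: zcls_trans v_v'; apply: (iso_zcls_homo iso2) u_v.
- by move=> e e_nz; rewrite (iso_len iso2) ?nz1 // (iso_len iso1).
- by move=> e1 e2 nz_1 nz_2 /(iso_einj iso2 (nz1 _ nz_1) (nz1 _ nz_2)) /(iso_einj iso1); apply.
- move=> e'' /(iso_esurj iso2)[e' /(iso_esurj iso1)[e e_nz <-] <-].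
  by exists e.
- move=> e e_nz; apply: zpair_trans (iso_ends iso2 (nz1 _ e_nz)).
  exact: zpair_map (iso_zcls_homo iso2) (iso_ends iso1 e_nz).
- by move=> i; apply: zcls_trans (iso_legs iso2 i); apply/(iso_zcls_homo iso2)/(iso_legs iso1).
- by move=> u; rewrite (iso_cwt iso1) (iso_cwt iso2).
Qed.

Section Inverse.
Variables (x y : trep L n) (phi : vert x -> vert y) (psi : 'I_(ne (tgr x)) -> 'I_(ne (tgr y))).
Variables (phi' : vert y -> vert x) (pre : 'I_(ne (tgr y)) -> 'I_(ne (tgr x))).
Hypotheses (iso : trop_iso phi psi) (phiK : forall v, zcls z (phi (phi' v)) v).
Hypothesis preK : forall h, tlen y h != z -> tlen x (pre h) != z /\ psi (pre h) = h.

Lemma iso_inv_zcls_phi u v : zcls z (phi u) v -> zcls z u (phi' v).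
Proof. by move=> uv; rewrite (iso_zcls iso); apply: zcls_trans uv _; rewrite zcls_sym. Qed.

Lemma iso_invK u : zcls z (phi' (phi u)) u.
Proof. by rewrite zcls_sym; apply/iso_inv_zcls_phi/zcls_refl. Qed.

Lemma iso_inv_zcls u v : zcls z u v = zcls z (phi' u) (phi' v).
Proof. by rewrite (iso_zcls iso); apply: zcls_congr; rewrite zcls_sym. Qed.

Lemma iso_pre_psi e : tlen x e != z -> tlen y (psi e) != z /\ pre (psi e) = e.
Proof.
move=> e_nz; have psi_nz : tlen y (psi e) != z by rewrite (iso_len iso).
by split=> //; have [pre_nz /(iso_einj iso pre_nz e_nz)] := preK psi_nz.
Qed.

Lemma iso_inv_zcls_homo : {homo phi' : u v / zcls z u v}.
Proof. by move=> u v; rewrite iso_inv_zcls. Qed.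

Lemma trop_iso_inv : trop_iso phi' pre.
Proof.
split.
- exact: iso_inv_zcls.
- by move=> v; exists (phi v); apply: iso_invK.
- by move=> h /preK[pre_nz psi_pre]; rewrite -{2}psi_pre (iso_len iso).
- by move=> h1 h2 /preK[_ psi_pre1] /preK[_ psi_pre2] pre12; rewrite -psi_pre1 -psi_pre2 pre12.
- by move=> e /iso_pre_psi[psi_nz pre_psi]; exists (psi e).
- move=> h /preK[pre_nz psi_pre]; have := iso_ends iso pre_nz; rewrite psi_pre zpair_sym.
  move=> /(zpair_map iso_inv_zcls_homo)/zpair_trans; apply.
  by rewrite /zpair /= !iso_invK.
- by move=> i; rewrite zcls_sym; apply: iso_inv_zcls_phi; apply: iso_legs iso i.
- by move=> v; rewrite (iso_cwt iso); apply: cwt_zcls; rewrite zcls_sym.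
Qed.

End Inverse.

Lemma trop_equiv_sym x y : (0 < ne (tgr x))%N -> trop_equiv z x y -> trop_equiv z y x.
Proof.
move=> x_ne /trop_equivP[phi [psi iso]].
have [phi' phiK] := choice (iso_vsurj iso).
have [pre preK] := iso_edge_inverse iso x_ne.
by apply/trop_equivP; exists phi', pre; apply: trop_iso_inv iso phiK preK.
Qed.

Definition zroot x (u : vert x) : vert x := fingraph.root (@zadj L z n x) u.

Lemma zcls_zroot x (u : vert x) : zcls z u (zroot u).
Proof. exact: connect_root. Qed.

Lemma zrootP x (u v : vert x) : reflect (zroot u = zroot v) (zcls z u v).
Proof. exact/fingraph.rootP/zadj_connect_sym. Qed.

Lemma zroot_idem x (u : vert x) : zroot (zroot u) = zroot u.
Proof. exact/root_root/zadj_connect_sym. Qed.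

Definition zero_extends (x : trep L n) (a : 'I_(ne (tgr x)) -> L) : Prop :=
  forall e, tlen x e = z -> a e = z.
Arguments zero_extends : clear implicits.

Lemma zero_extends_nz x a e : zero_extends x a -> a e != z -> tlen x e != z.
Proof. by move=> a_ext; apply: contra => /eqP/a_ext ->. Qed.

Lemma zcls_extend x a : zero_extends x a ->
  forall u v, zcls z (x:=x) u v -> zcls z (x:=TRep (tgr x) a) u v.
Proof.
rewrite /zcls => a_ext; apply: connect_sub => u v /existsP[e /andP[/eqP e0 uv]].
by apply/connect1/existsP; exists e; rewrite /= a_ext ?eqxx.
Qed.

Definition cwt_local x (v : vert x) : int :=
  (wt (tgr x) v)%:Z - 1 + #|[set e | (tlen x e == z) && ((ends (tgr x) e).1 == v)]%SET|%:Z.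

Lemma cwtE x (u : vert x) : cwt z u = 1 + \sum_(v | zcls z u v) cwt_local v.
Proof.
rewrite /cwt /cwt_local !card_classical_set.
have -> : #|[set v | zcls z u v]%SET| = (\sum_(v | zcls z u v) 1)%N.
  by rewrite -sum1_card; apply: eq_bigl => v; rewrite inE.
rewrite big_split /= sumrB -!Posz_sum sum_card_fibers; ring.
Qed.

Lemma cwt_extend x a : zero_extends x a -> forall u : vert x,
  cwt z (x:=TRep (tgr x) a) u =
  1 + \sum_(r | zcls z (x:=TRep (tgr x) a) u r && (zroot (x:=x) r == r))
        (cwt z (x:=x) r - 1)
    + #|[set e | (a e == z) && (tlen x e != z) &&
                zcls z (x:=TRep (tgr x) a) u (ends (tgr x) e).1]%SET|%:Z.
Proof.
move=> a_ext u; set x' := TRep (tgr x) a.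
have local_extend (v : vert x) : cwt_local (x:=x') v = cwt_local (x:=x) v +
    #|[set e | (a e == z) && (tlen x e != z) && ((ends (tgr x) e).1 == v)]%SET|%:Z.
  rewrite /cwt_local /= -[RHS]addrA -PoszD; congr (_ + Posz _).
  rewrite -(cardsID [set e | tlen x e == z]); congr (_ + _)%N; congr #|pred_of_set _|;
    apply/setP => e; rewrite !inE.
    case: (eqVneq (tlen x e) z) => [e0|_]; [by rewrite (a_ext _ e0) eqxx andbT | by rewrite andbF].
  by rewrite andbA (andbC (tlen x e != z)).
rewrite cwtE (eq_bigr _ (fun v _ => local_extend v)) big_split /= -Posz_sum sum_card_fibers addrA.
congr (_ + _ + _).
rewrite (partition_big (@zroot x) (fun r => zcls z (x:=x') u r && (zroot (x:=x) r == r))) /=;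
  last by move=> v uv; rewrite zroot_idem eqxx andbT (zcls_trans uv) ?(zcls_extend a_ext (zcls_zroot v)).
apply: eq_bigr => r /andP[ur /eqP rr]; rewrite cwtE addrC addKr.
apply: eq_bigl => v; apply/idP/idP => [/andP[_ /eqP vr]|rv].
  by apply/zrootP; rewrite vr rr.
apply/andP; split; first exact: zcls_trans ur (zcls_extend a_ext rv).
by rewrite -rr; apply/eqP/esym/zrootP.
Qed.

Definition transport_len x y (pre : 'I_(ne (tgr y)) -> 'I_(ne (tgr x)))
    (a : 'I_(ne (tgr x)) -> L) : 'I_(ne (tgr y)) -> L :=
  fun h => if tlen y h == z then z else a (pre h).

Section Transport.
Variables (x y : trep L n) (phi : vert x -> vert y) (psi : 'I_(ne (tgr x)) -> 'I_(ne (tgr y))).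
Variables (pre : 'I_(ne (tgr y)) -> 'I_(ne (tgr x))) (a : 'I_(ne (tgr x)) -> L).
Hypotheses (iso : trop_iso phi psi) (a_ext : zero_extends x a).
Hypothesis preK : forall h, tlen y h != z -> tlen x (pre h) != z /\ psi (pre h) = h.
Local Notation x' := (TRep (tgr x) a).
Local Notation y' := (TRep (tgr y) (transport_len pre a)).

Lemma transport_len_ext : zero_extends y (transport_len pre a).
Proof. by move=> h h0; rewrite /transport_len h0 eqxx. Qed.

Lemma transport_len_psi e : tlen x e != z -> transport_len pre a (psi e) = a e.
Proof.
move=> e_nz; have [psi_nz pre_psi] := iso_pre_psi iso preK e_nz.
by rewrite /transport_len (negbTE psi_nz) pre_psi.
Qed.

Lemma zcls_transport_zero_edge e : a e = z ->
  zcls z (x:=y') (phi (ends (tgr x) e).1) (phi (ends (tgr x) e).2).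
Proof.
move=> a0; have y_ext := transport_len_ext.
case: (eqVneq (tlen x e) z) => [e0|e_nz].
  exact/(zcls_extend y_ext)/(iso_zcls_homo iso)/zcls_zero_edge.
apply: (@zpair_zcls y' (phi (ends (tgr x) e).1, phi (ends (tgr x) e).2) (ends (tgr y) (psi e))).
  exact: zpair_map (zcls_extend y_ext) (iso_ends iso e_nz).
by apply: zcls_zero_edge; rewrite /= transport_len_psi.
Qed.

Lemma zcls_transport u v : zcls z (x:=x') u v -> zcls z (x:=y') (phi u) (phi v).
Proof.
apply: connect_homo => {}u {}v /existsP[e /andP[/eqP a0 uv]].
have := zcls_transport_zero_edge a0.
by case/orP: uv => /eqP -> /= uv //; rewrite zcls_sym in uv.
Qed.

End Transport.

Section Degenerate.
Variables (x y : trep L n) (phi : vert x -> vert y) (psi : 'I_(ne (tgr x)) -> 'I_(ne (tgr y))).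
Variables (pre : 'I_(ne (tgr y)) -> 'I_(ne (tgr x))) (a : 'I_(ne (tgr x)) -> L).
Hypotheses (iso : trop_iso phi psi) (a_ext : zero_extends x a).
Hypothesis preK : forall h, tlen y h != z -> tlen x (pre h) != z /\ psi (pre h) = h.
Local Notation b := (transport_len pre a).
Local Notation x' := (TRep (tgr x) a).
Local Notation y' := (TRep (tgr y) b).

Lemma transport_len_inv : transport_len psi b = a.
Proof.
apply/funext => e; rewrite {1}/transport_len.
case: (eqVneq (tlen x e) z) => [/a_ext //|e_nz].
exact (transport_len_psi a iso preK e_nz).
Qed.

Lemma degenerate_zcls u v : zcls z (x:=x') u v = zcls z (x:=y') (phi u) (phi v).
Proof.
apply/idP/idP; first exact: (zcls_transport iso preK).
have [phi' phiK] := choice (iso_vsurj iso).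
move=> /(zcls_transport (trop_iso_inv iso phiK preK) (iso_pre_psi iso preK)).
rewrite transport_len_inv (@zcls_congr x' _ u _ v) //.
all: exact/(zcls_extend a_ext)/(iso_invK iso phiK).
Qed.

Lemma degenerate_roots_sum u :
  \sum_(r | zcls z (x:=x') u r && (zroot (x:=x) r == r)) (cwt z (x:=x) r - 1) =
  \sum_(p | zcls z (x:=y') (phi u) p && (zroot (x:=y) p == p)) (cwt z (x:=y) p - 1).
Proof.
pose h r := zroot (x:=y) (phi r).
pose SX := [set r | zcls z (x:=x') u r && (zroot (x:=x) r == r)].
pose SY := [set p | zcls z (x:=y') (phi u) p && (zroot (x:=y) p == p)].
have y_ext := transport_len_ext pre a.
have h_inj : {in SX &, injective h}.
  move=> r1 r2; rewrite !inE => /andP[_ /eqP r1r] /andP[_ /eqP r2r].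
  by move=> /zrootP; rewrite -(iso_zcls iso) => /zrootP; rewrite r1r r2r.
have h_im : SY = h @: SX.
  apply/setP => p; rewrite inE; apply/idP/imsetP => [/andP[up /eqP pp]|].
    have [u0 u0p] := iso_vsurj iso p; pose r0 := zroot (x:=x) u0.
    have r0p : zcls z (phi r0) p.
      by apply: zcls_trans u0p; apply/(iso_zcls_homo iso); rewrite zcls_sym zcls_zroot.
    exists r0; last by rewrite /h -pp; apply/(@zrootP y); rewrite zcls_sym.
    rewrite inE zroot_idem eqxx andbT degenerate_zcls.
    by apply: zcls_trans up _; rewrite zcls_sym; apply: zcls_extend y_ext _ _ r0p.
  case=> r; rewrite inE degenerate_zcls => /andP[ur _] ->.
  rewrite /h zroot_idem eqxx andbT.
  by apply: zcls_trans ur _; apply/(zcls_extend y_ext)/zcls_zroot.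
transitivity (\sum_(r in SX) (cwt z (x:=x) r - 1)); first by apply: eq_bigl => r; rewrite inE.
transitivity (\sum_(p in SY) (cwt z (x:=y) p - 1)); last by apply: eq_bigl => p; rewrite inE.
rewrite h_im big_imset //; apply: eq_bigr => r _; rewrite (iso_cwt iso).
by congr (_ - 1); apply/cwt_zcls/zcls_zroot.
Qed.

Lemma degenerate_new_edges u :
  #|[set e | (a e == z) && (tlen x e != z) && zcls z (x:=x') u (ends (tgr x) e).1]%SET| =
  #|[set h | (b h == z) && (tlen y h != z) && zcls z (x:=y') (phi u) (ends (tgr y) h).1]%SET|.
Proof.
have y_ext := transport_len_ext pre a.
have iso_ends' e : tlen x e != z ->
    zpair (x:=y') (phi (ends (tgr x) e).1, phi (ends (tgr x) e).2) (ends (tgr y) (psi e)).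
  by move=> e_nz; apply: zpair_map (zcls_extend y_ext) (iso_ends iso e_nz).
have psi_inj : {in [set e | (a e == z) && (tlen x e != z) &&
    zcls z (x:=x') u (ends (tgr x) e).1]%SET &, injective psi}.
  by move=> e1 e2; rewrite !inE => /andP[/andP[_ e1_nz] _] /andP[/andP[_ e2_nz] _];
    apply: (iso_einj iso).
rewrite -(card_in_imset psi_inj); apply: eq_card => h; apply/imsetP/idP.
  case=> e; rewrite inE => /andP[/andP[/eqP a0 e_nz] ue] ->.
  rewrite inE (transport_len_psi a iso preK e_nz) a0 eqxx (iso_len iso) // e_nz /=.
  rewrite degenerate_zcls in ue; apply: zcls_trans ue _.
  apply: zpair_zcls_fst (iso_ends' e e_nz) _.
  by rewrite -degenerate_zcls; apply: zcls_zero_edge.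
rewrite inE => /andP[/andP[b0 h_nz] uh]; have [pre_nz psi_pre] := preK h_nz.
have a0 : a (pre h) = z by move: b0; rewrite /transport_len (negbTE h_nz) => /eqP.
exists (pre h) => //; rewrite inE a0 eqxx pre_nz /= degenerate_zcls.
have h_ends := iso_ends' _ pre_nz; rewrite psi_pre zpair_sym in h_ends.
by apply: zcls_trans uh (zpair_zcls_fst h_ends _); apply/zcls_zero_edge/eqP.
Qed.

Lemma trop_iso_degenerate : trop_iso (x:=x') (y:=y') phi psi.
Proof.
have y_ext := transport_len_ext pre a.
split.
- exact: degenerate_zcls.
- by move=> p; have [u up] := iso_vsurj iso p; exists u; exact (zcls_extend y_ext up).
- by move=> e /(zero_extends_nz a_ext) e_nz; rewrite /= (transport_len_psi a iso preK e_nz).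
- by move=> e1 e2 /(zero_extends_nz a_ext) nz1 /(zero_extends_nz a_ext) nz2; exact (iso_einj iso nz1 nz2).
- move=> h b_nz; have [pre_nz psi_pre] := preK (zero_extends_nz y_ext b_nz).
  by exists (pre h) => //; rewrite /= -(transport_len_psi a iso preK pre_nz) psi_pre.
- move=> e /(zero_extends_nz a_ext) e_nz.
  exact: zpair_map (zcls_extend y_ext) (iso_ends iso e_nz).
- by move=> i; apply/(zcls_extend y_ext)/(iso_legs iso).
- by move=> u; rewrite !cwt_extend // degenerate_roots_sum degenerate_new_edges.
Qed.

End Degenerate.

Lemma trop_equiv_degenerate x y : (0 < ne (tgr x))%N -> trop_equiv z x y ->
  exists pre : 'I_(ne (tgr y)) -> 'I_(ne (tgr x)), forall a, zero_extends x a ->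
    trop_equiv z (TRep (tgr x) a) (TRep (tgr y) (transport_len pre a)).
Proof.
move=> x_ne /trop_equivP[phi [psi iso]]; have [pre preK] := iso_edge_inverse iso x_ne.
by exists pre => a a_ext; apply/trop_equivP; exists phi, psi; apply: trop_iso_degenerate.
Qed.

End ZeroClasses.

Arguments zero_extends {L} z {n} x a.

Section Stability.
Variables (g n : nat).
Implicit Types (a b : 'I_n -> rat) (S : {set 'I_n}).

Lemma wsum_le_card a S : (forall i, a i <= 1) -> wsum a S <= #|S|%:R.
Proof.
by move=> a_le1; rewrite /wsum -sum1_card natr_sum; apply: ler_sum => i _; rewrite a_le1.
Qed.

Lemma wsum_ge0 a S : (forall i, 0 < a i) -> 0 <= wsum a S.
Proof. by move=> a_gt0; apply: sumr_ge0 => i _; apply: ltW. Qed.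

Lemma wsum_gt0 a S : (forall i, 0 < a i) -> (0 < #|S|)%N -> 0 < wsum a S.
Proof.
move=> a_gt0 /card_gt0P[i iS]; rewrite /wsum (bigD1 i) //= ltr_pwDl //.
by apply: sumr_ge0 => j _; apply: ltW.
Qed.

Lemma wsum_gt0_transfer a b S : (forall i, 0 < b i) -> 0 < wsum a S -> 0 < wsum b S.
Proof.
move=> b_gt0 aS; apply: wsum_gt0 => //; rewrite lt0n; apply: contraTneq aS => /cards0_eq ->.
by rewrite /wsum big_set0 ltxx.
Qed.

Lemma wsum_setC a S : \sum_(i < n) a i = wsum a S + wsum a (~: S).
Proof. by rewrite /wsum (bigID (mem S)) /=; congr (_ + _); apply: eq_bigl => i; rewrite inE. Qed.

Lemma sum_permute_wt (s : 'S_n) a : \sum_(i < n) permute_wt s a i = \sum_(i < n) a i.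
Proof. by rewrite /permute_wt [RHS](reindex_inj (@perm_inj _ s)). Qed.

Lemma weight_datum_permute (s : 'S_n) a : weight_datum g a -> weight_datum g (permute_wt s a).
Proof. by case=> a01 tot; split; [move=> i; apply: a01 | rewrite sum_permute_wt]. Qed.

(* Only the walls are constrained by [chamber_le]; the other subsets [S] with [1 < wsum a S]
   are forced to have [1 < wsum b S] by the bounds [a i <= 1] and the total weight of [b]. *)
Lemma chamber_le_gt1 a b : weight_datum g a -> weight_datum g b -> chamber_le g a b ->
  forall S, 1 < wsum a S -> 1 < wsum b S.
Proof.
move=> [a01 _] [b01 b_tot] a_le_b S aS.
have S_ge2 : (2 <= #|S|)%N.
  by rewrite -(ltr_nat rat); apply: lt_le_trans aS (wsum_le_card _ (fun i => (a01 i).2)).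
have S_len : (#|S| <= n)%N by rewrite -[X in (_ <= X)%N]card_ord max_card.
case: (leqP 1 g) => [g_ge1|g_eq0]; first by apply: a_le_b aS; rewrite /wall_index g_ge1 S_ge2.
case: (leqP #|S| (n - 2)) => [S_len2|S_big].
  by apply: a_le_b aS; rewrite /wall_index leqNgt g_eq0 S_ge2.
have SC_le1 : wsum b (~: S) <= 1.
  apply: le_trans (wsum_le_card _ (fun i => (b01 i).2)) _.
  by rewrite lern1; move: (cardsC S); rewrite card_ord; lia.
have g0 : g = 0%N by lia.
move: b_tot; rewrite g0 muln0 (wsum_setC b S) /=; lra.
Qed.

Lemma valA_permute_wt (s : 'S_n) a (G : lgraph n) (v : 'I_(nv G)) :
  valA a v = wsum (permute_wt s a) [set i | leg G (s i) == v].
Proof.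
rewrite /valA /wsum /permute_wt (reindex_inj (@perm_inj _ s)) /=.
by apply: eq_bigl => i; rewrite inE.
Qed.

Lemma connected_isolated_vertex (G : lgraph n) (v : 'I_(nv G)) :
  connected_graph G -> valE v = 0%N -> ne G = 0%N /\ forall u, u = v.
Proof.
move=> [_ G_conn] /eqP; rewrite /valE !card_classical_set addn_eq0 => /andP[/eqP E1 /eqP E2].
have not_end e : ((ends G e).1 != v) && ((ends G e).2 != v).
  by move/setP/(_ e): (cards0_eq E1); move/setP/(_ e): (cards0_eq E2); rewrite !inE => -> ->.
have all_v u : u = v.
  case/connectP: (G_conn v u) => -[_ /= -> //|w p /andP[/existsP[e /orP[]/eqP ends_e]] _ _];
    by have := not_end e; rewrite ends_e /= eqxx ?andbF.
split=> //; case: (posnP (ne G)) => // G_ne.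
by have := not_end (Ordinal G_ne); rewrite (all_v (ends G _).1) eqxx.
Qed.

Lemma stable_graph_relabel (A B : 'I_n -> rat) (s1 s2 : 'S_n) (G : lgraph n) :
  weight_datum g A -> weight_datum g B ->
  chamber_le g (permute_wt s1 A) (permute_wt s2 B) ->
  stable_graph g A G -> stable_graph g B (relabel (s2^-1 * s1)%g G).
Proof.
move=> wA wB a_le_b [G_conn [G_genus G_stab]].
have wa := weight_datum_permute s1 wA; have wb := weight_datum_permute s2 wB.
have [[a01 _] [b01 b_tot]] := (wa, wb).
do 2!split=> //; move=> v; set S := [set i | leg G (s1 i) == v].
have -> : valA B (G:=relabel (s2^-1 * s1)%g G) v = wsum (permute_wt s2 B) S.
  by rewrite (valA_permute_wt s2); congr wsum; apply/setP => i; rewrite !inE /= permM permK.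
move: (G_stab v); rewrite (valA_permute_wt s1) -/S /=; set k := (2 * wt G v + valE v)%N.
have b_ge0 := wsum_ge0 S (fun i => (b01 i).1).
case: (ltnP 2 k) => [k_ge3 _|k_le2].
  have k3 : 3%:R <= k%:R :> rat by rewrite ler_nat.
  lra.
have [->|[->|k0]] : k = 2%N \/ k = 1%N \/ k = 0%N by lia.
- move=> aS; suff : 0 < wsum (permute_wt s2 B) S by lra.
  by apply: (@wsum_gt0_transfer (permute_wt s1 A) _ S (fun i => (b01 i).1)); lra.
- move=> aS; suff : 1 < wsum (permute_wt s2 B) S by lra.
  by apply: (chamber_le_gt1 wa wb a_le_b); lra.
have valE0 : valE v = 0%N by lia.
have [G_ne0 all_v] := connected_isolated_vertex G_conn valE0.
have g0 : g = 0%N.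
  have wt0 : (\sum_(u < nv G) wt G u = 0)%N by apply: big1 => u _; rewrite (all_v u); lia.
  by move: G_genus G_conn.1; rewrite wt0 G_ne0; lia.
have -> : wsum (permute_wt s2 B) S = \sum_(i < n) permute_wt s2 B i.
  by apply: eq_bigl => i; rewrite inE (all_v (leg G (s1 i))) eqxx.
by move: b_tot; rewrite k0 g0 /=; lra.
Qed.

End Stability.

Local Open Scope classical_set_scope.

Lemma nbhs_neq (T : topologicalType) (z t : T) :
  closed [set z] -> t != z -> nbhs t [set u | u != z].
Proof.
move=> z_closed /eqP tz; have := closed_openC z_closed; rewrite openE => /(_ t tz).
by apply: filterS => u /eqP.
Qed.

Lemma hausdorff_closed_set1 (T : topologicalType) :
  hausdorff_space T -> forall z : T, closed [set z].
Proof. by move=> T_haus; apply/accessible_closed_set1/hausdorff_accessible. Qed.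

Section Embedding.
Variables (T : topologicalType) (z : T) (dom : set T).
Hypotheses (dom_z : dom z) (z_closed : closed [set z]).
Variables (g n : nat) (A B : 'I_n -> rat) (s : 'S_n).
Hypothesis stable_AB : forall G, stable_graph g A G -> stable_graph g B (relabel s G).
Local Notation ptsA := (mpts dom g A).
Local Notation ptsB := (mpts dom g B).

Lemma mpts_relabel x : ptsA x -> ptsB (trelabel s x).
Proof. by case=> x_stable x_dom; split => //; apply: stable_AB. Qed.

Lemma mopen_relabel_preimage V : mopen z dom g B V ->
  mopen z dom g A [set x | ptsA x /\ V (trelabel s x)].
Proof.
move=> [_ [V_sat V_cone]]; split; [|split].
- by move=> x [].
- move=> x y xA yA xy [_ Vx]; split => //.
  by apply: V_sat Vx; [exact: mpts_relabel | exact: mpts_relabel | exact/trop_equiv_relabel].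
- move=> G G_stable l l_dom [lA Vl].
  have [N [N_nbhs N_V]] := V_cone (relabel s G) (stable_AB G_stable) l l_dom Vl.
  by exists N; split => // l' l'_dom l'N; split; [split | exact: N_V].
Qed.

(* The largest set of [B]-curves whose trace on the image of the [A]-curves is [U]. *)
Definition ext_open (U : set (trep T n)) : set (trep T n) :=
  [set y | ptsB y /\ forall x, ptsA x -> trop_equiv z y (trelabel s x) -> U x].

Lemma ext_open_relabel U : saturated z ptsA U ->
  forall x, ptsA x -> U x <-> ext_open U (trelabel s x).
Proof.
move=> U_sat x xA; split=> [Ux|[_ /(_ x xA (trop_equiv_refl _ _))] //].
split; first exact: mpts_relabel.
by move=> x' x'A /trop_equiv_relabel x_x'; apply: U_sat xA x'A x_x' Ux.
Qed.

Lemma ext_open_saturated U : saturated z ptsB (ext_open U).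
Proof.
move=> y1 y2 _ y2B y12 [_ U1]; split=> // x xA y2x.
exact: U1 xA (trop_equiv_trans y12 y2x).
Qed.

(* Near [l], a curve with the zero pattern of a witness [l0] degenerates like the witness;
   transporting lengths along the witness isomorphism gives nearby [A]-curves in [U]. *)
Lemma ext_open_witness U (G : lgraph n) (l l0 : 'I_(ne G) -> T) (x0 : trep T n) :
  mopen z dom g A U -> (forall e, dom (l e)) -> ext_open U (TRep G l) -> (0 < ne G)%N ->
  zero_extends z (TRep G l0) l -> ptsA x0 -> trop_equiv z (TRep G l0) (trelabel s x0) ->
  exists N : 'I_(ne G) -> set T, (forall e, nbhs (l e) (N e)) /\
    forall l', (forall e, dom (l' e)) -> (forall e, N e (l' e)) ->
      zero_extends z (TRep G l0) l' ->
      forall x, ptsA x -> trop_equiv z (TRep G l') (trelabel s x) -> U x.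
Proof.
move=> [_ [U_sat U_cone]] l_dom [_ Ul] G_ne l0_l [x0_stable _] eq0.
have [pre pre_spec] := trop_equiv_degenerate (x := TRep G l0) G_ne eq0.
have transportA l' : (forall e, dom (l' e)) ->
    ptsA (TRep (tgr x0) (transport_len z (y:=trelabel s x0) pre l')).
  by move=> l'_dom; split=> // h; rewrite /= /transport_len; case: (_ == z).
pose m0 := transport_len z (y:=trelabel s x0) pre l.
have [NH [NH_nbhs NH_U]] := U_cone _ x0_stable m0 (transportA l l_dom).2
  (Ul _ (transportA l l_dom) (pre_spec l l0_l)).
exists (fun e => [set t | forall h, pre h = e -> tlen x0 h != z -> NH h t]); split.
  move=> e; apply: filter_forall => h; case: (pselect (pre h = e /\ tlen x0 h != z)).
    case=> <- h_nz; have m0h : m0 h = l (pre h) by rewrite /m0 /transport_len /= (negbTE h_nz).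
    by rewrite -m0h; apply: filterS (NH_nbhs h) => t NHt _ _.
  by move=> not_h; apply: filterS filterT => t _ *; case: not_h.
move=> l' l'_dom l'N l0_l' x xA eqx; have l'A := transportA l' l'_dom.
apply: U_sat l'A xA _ (NH_U _ l'A.2 _).
  apply/(trop_equiv_relabel z s).
  exact: trop_equiv_trans (trop_equiv_sym (x := TRep G l') G_ne (pre_spec l' l0_l')) eqx.
move=> h; rewrite /= /transport_len /=; case: (eqVneq (tlen x0 h) z) => [h0|h_nz].
  by have := nbhs_singleton (NH_nbhs h); rewrite /m0 /transport_len /= h0 eqxx.
exact: l'N (pre h) h erefl h_nz.
Qed.

Lemma ext_open_cone U (G : lgraph n) : mopen z dom g A U -> stable_graph g B G ->
  cone_open dom (fun l : 'I_(ne G) -> T => ext_open U (TRep G l)).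
Proof.
move=> U_open G_stable l l_dom Vl; case: (posnP (ne G)) => [G_ne0|G_ne].
  exists (fun _ => setT); split=> [e|l' _ _]; first by have := ltn_ord e; rewrite {2}G_ne0.
  by have -> : l' = l by apply/funext => e; have := ltn_ord e; rewrite {2}G_ne0.
have pattern_nbhs (P : {set 'I_(ne G)}) : exists NP : 'I_(ne G) -> set T,
    (forall e, nbhs (l e) (NP e)) /\ forall l', (forall e, dom (l' e)) ->
      (forall e, NP e (l' e)) -> (forall e, (l' e == z) = (e \in P)) ->
      zero_extends z (TRep G l') l ->
      forall x, ptsA x -> trop_equiv z (TRep G l') (trelabel s x) -> U x.
  case: (pselect (exists l0 x0, [/\ forall e, (l0 e == z) = (e \in P),
      zero_extends z (TRep G l0) l, ptsA x0 & trop_equiv z (TRep G l0) (trelabel s x0)]))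
    => [[l0 [x0 [P_l0 l0_l x0A eq0]]]|no_witness].
    have [N [N_nbhs N_U]] := ext_open_witness U_open l_dom Vl G_ne l0_l x0A eq0.
    exists N; split=> // l' l'_dom l'N P_l' _; apply: N_U => // e /eqP.
    by rewrite P_l0 -P_l' => /eqP.
  exists (fun _ => setT); split=> [e|l' _ _ P_l' l'_l x xA eqx]; first exact: filterT.
  by case: no_witness; exists l', x.
have [NP NP_spec] := choice pattern_nbhs.
exists (fun e => [set t | (l e != z -> t != z) /\ forall P, NP P e t]); split.
  move=> e; apply: filterI; last by apply: filter_forall => P; apply: (NP_spec P).1.
  case: (eqVneq (l e) z) => [_ | le_nz]; first by apply: filterS filterT => t _.
  by apply: filterS (nbhs_neq z_closed le_nz) => t tz _.
move=> l' l'_dom l'N; split; first by split.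
move=> x xA; apply: (NP_spec [set e | l' e == z]%SET).2 => // [e|e|]; first by case: (l'N e).
  by rewrite inE.
move=> e /eqP l'0; apply/eqP; apply: contraTT l'0 => le_nz; exact: (l'N e).1 le_nz.
Qed.

Lemma moduli_embedding :
  qembedding (moduli z dom g A) (moduli z dom g B) (@trelabel T n s).
Proof.
split; [exact: mpts_relabel | split; [|split; [|split]]].
- by move=> x y _ _ xy; apply/trop_equiv_relabel.
- by move=> x y _ _ /trop_equiv_relabel.
- exact: mopen_relabel_preimage.
move=> U U_open; exists (ext_open U); split; last exact: ext_open_relabel U_open.2.1.
split; [by move=> y [] | split; [exact: ext_open_saturated|]].
by move=> G G_stable; apply: ext_open_cone.
Qed.

End Embedding.

Definition qsub (X : Type) (S : qspace X) (C : set X) : qspace X :=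
  QSpace (qpts S `&` C) (qeq S) (fun U => exists V, qopen S V /\ U = V `&` C).

Lemma qembedding_sub (X Y : Type) (SX : qspace X) (SY : qspace Y) (f : X -> Y)
    (C : set X) (D : set Y) :
  qembedding SX SY f -> (forall x, C x -> D (f x)) -> qembedding (qsub SX C) (qsub SY D) f.
Proof.
move=> [f_pts [f_eq [f_eqV [f_open f_ext]]]] fCD; split; [|split; [|split; [|split]]].
- by move=> x [xX Cx]; split; [apply: f_pts | apply: fCD].
- by move=> x y [xX _] [yX _]; apply: f_eq.
- by move=> x y [xX _] [yX _]; apply: f_eqV.
- move=> _ [V [V_open ->]]; exists [set x | qpts SX x /\ V (f x)]; split; first exact: f_open.
  apply/seteqP; split=> x /=; first by case=> [[xX Cx] [Vfx _]].
  by case=> [[xX Vfx] Cx]; do !split=> //; apply: fCD.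
- move=> _ [U [U_open ->]]; have [V [V_open UV]] := f_ext U U_open.
  exists (V `&` D); split; first by exists V.
  move=> x [xX Cx]; rewrite /setI /= (UV x xX); split=> [[]|[]] //; split=> //; exact: fCD.
Qed.

Lemma Delta_tropE (R : realType) (g n : nat) (A : 'I_n -> rat) :
  Delta_trop R g A = qsub (Mtrop R g A) [set x | total_length x = 1].
Proof. by []. Qed.

Theorem mainTheorem1 (R : realType) (g n : nat) (N : nat)
    (As : nat -> ('I_n -> rat)) :
  (1 <= n)%N ->
  (forall p, (p < N)%N -> weight_datum g (As p) /\ in_chamber g (As p)) ->
  (forall p, (p.+1 < N)%N -> sym_chamber_le g (As p) (As p.+1)) ->
  forall p, (p.+1 < N)%N ->
    exists s : 'S_n,
      qembedding (Mtrop R g (As p)) (Mtrop R g (As p.+1)) (@trelabel R n s) /\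
      qembedding (Mtrop_bar R g (As p)) (Mtrop_bar R g (As p.+1))
                 (@trelabel (\bar R) n s) /\
      qembedding (Delta_trop R g (As p)) (Delta_trop R g (As p.+1))
                 (@trelabel R n s).
Proof.
move=> _ data chambers p p_lt.
have [[wA _] [wB _]] := (data p (ltnW p_lt), data p.+1 p_lt).
have [s1 [s2 A_le_B]] := chambers p p_lt.
have stable_AB G := stable_graph_relabel (G := G) wA wB A_le_B.
have Mtrop_emb : qembedding (Mtrop R g (As p)) (Mtrop R g (As p.+1)) (@trelabel R n (s2^-1 * s1)).
  apply: (moduli_embedding _ _ stable_AB); first by rewrite /= lexx.
  apply: hausdorff_closed_set1; exact: Rhausdorff.
exists (s2^-1 * s1)%g; split; [exact: Mtrop_emb | split].
  apply: (moduli_embedding _ _ stable_AB); first by rewrite /= lexx.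
  apply: hausdorff_closed_set1; exact: ereal_hausdorff.
by rewrite !Delta_tropE; apply: qembedding_sub Mtrop_emb _ => x len1.
Qed.
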